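(* Let $K\ge 2$, and let $\boldsymbol{x}_k$, $r_f$, $\boldsymbol{f}_k$, $\boldsymbol{f}$, $\boldsymbol{\eta}^{(\ell)}$ be as in the context. Fix $\ell\le r_f$ and define $w^{(\ell)}=[\lambda_\ell(\operatorname{cov}(\boldsymbol{f}))]^{-1/2}(\boldsymbol{\eta}^{(\ell)})^\top\boldsymbol{f}$ and, for $k\le K$, $z_k^{(\ell)}=0$ if $\boldsymbol{\eta}_k^{(\ell)}=\boldsymbol{0}$ and $z_k^{(\ell)}=(\boldsymbol{\eta}_k^{(\ell)}/\|\boldsymbol{\eta}_k^{(\ell)}\|_F)^\top\boldsymbol{f}_k$ otherwise. For a real number $\alpha$, put $c=\alpha w^{(\ell)}$ and $d_k=z_k^{(\ell)}-c$ ($k\le K$). Let $\alpha^{(\ell)}$ be defined by: (C.1) $|\alpha^{(\ell)}|$ is the smallest value of $|\alpha|$ such that at least one pair $j\neq k$ satisfies $d_j\perp d_k$; (C.2) if (C.1) admits two values of $\alpha$, then $\alpha^{(\ell)}$ is the negative one. For $1\le j<k\le K$ let $$\Delta^{(\ell)}_{jk}=\big[\cos\{\theta(w^{(\ell)},z_j^{(\ell)})\}+\cos\{\theta(w^{(\ell)},z_k^{(\ell)})\}\big]^2-4\cos\{\theta(z_j^{(\ell)},z_k^{(\ell)})\}.$$ Then $\alpha^{(\ell)}$ exists (in particular, there is at least one pair $j<k$ with $\Delta^{(\ell)}_{jk}\ge 0$), and $$\alpha^{(\ell)}\in\operatorname*{argmin}_{\alpha^{(\ell)}_{jk}}\Big\{|\alpha^{(\ell)}_{jk}|:\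 \alpha^{(\ell)}_{jk}=\tfrac12\big[\cos\{\theta(w^{(\ell)},z_j^{(\ell)})\}+\cos\{\theta(w^{(\ell)},z_k^{(\ell)})\}-(\Delta^{(\ell)}_{jk})^{1/2}\big],\ \Delta^{(\ell)}_{jk}\ge0,\ 1\le j<k\le K\Big\}.$$
   Context: $\mathcal{L}_0^2$ denotes the vector space of real-valued random variables with zero mean and finite variance, endowed with the covariance as inner product; $\|x\|=\sqrt{\operatorname{var}(x)}$, $\perp$ means zero covariance, and $\theta(x,y)$ is the angle in this inner product space, so $\cos\{\theta(x,y)\}=\operatorname{corr}(x,y)$ with the convention $\operatorname{corr}(x,0)=0$. $\boldsymbol{x}_1,\dots,\boldsymbol{x}_K$ are random vectors ($\boldsymbol{x}_k\in\mathbb{R}^{p_k}$) with entries in $\mathcal{L}_0^2$; $\operatorname{span}(\boldsymbol{x}_k^\top)$ is the subspace spanned by the entries of $\boldsymbol{x}_k$, of dimension $r_k\ge1$; $r_f=\dim\sum_k\operatorname{span}(\boldsymbol{x}_k^\top)$. $\boldsymbol{f}_k\in\mathbb{R}^{r_k}$ is a random vector whose entries form an orthonormal basis of $\operatorname{span}(\boldsymbol{x}_k^\top)$, $\boldsymbol{f}=(\boldsymbol{f}_1^\top,\dots,\boldsymbol{f}_K^\top)^\top$, and $\boldsymbol{\eta}^{(1)},\dots,\boldsymbol{\eta}^{(r_f)}$ are orthonormal eigenvectors of $\operatorname{cov}(\boldsymbol{f})$, $\boldsymbol{\eta}^{(\ell)}$ corresponding to its $\ell$th largest eigenvalue $\lambda_\ell(\operatorname{cov}(\boldsymbol{f}))$,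 partitioned as $\boldsymbol{\eta}^{(\ell)}=((\boldsymbol{\eta}^{(\ell)}_1)^\top,\dots,(\boldsymbol{\eta}^{(\ell)}_K)^\top)^\top$ with $\boldsymbol{\eta}^{(\ell)}_k\in\mathbb{R}^{r_k}$. *)

(* L_0^2 is modelled as an abstract real inner-product space
   (V, cv) over a real closed field R; cv plays the role of the covariance. *)
From HB Require Import structures.
From mathcomp Require Import all_boot all_order all_algebra.
Set Implicit Arguments. Unset Strict Implicit. Unset Printing Implicit Defensive.
Import Order.TTheory GRing.Theory Num.Theory.
Local Open Scope ring_scope.

Section InnerProductSpace.
Variables (R : rcfType) (V : lmodType R).

Definition is_inner_product (cv : V -> V -> R) : Prop :=
  [/\ forall x y, cv x y = cv y x,
      forall a x y z, cv (a *: x + y) z = a * cv x z + cv y z,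
      forall x, 0 <= cv x x &
      forall x, cv x x = 0 -> x = 0].

Definition vnorm (cv : V -> V -> R) (x : V) : R := Num.sqrt (cv x x).

Definition perp (cv : V -> V -> R) (x y : V) : Prop := cv x y = 0.

Definition cos_angle (cv : V -> V -> R) (x y : V) : R :=
  if (vnorm cv x == 0) || (vnorm cv y == 0) then 0
  else cv x y / (vnorm cv x * vnorm cv y).

Definition in_span (I : finType) (g : I -> V) (v : V) : Prop :=
  exists c : I -> R, v = \sum_i c i *: g i.

Definition lin_indep (I : finType) (g : I -> V) (A : {set I}) : Prop :=
  forall c : I -> R, \sum_(i in A) c i *: g i = 0 -> forall i, i \in A -> c i = 0.

Definition span_dim (I : finType) (g : I -> V) (n : nat) : Prop :=
  (exists A : {set I}, lin_indep g A /\ #|A| = n) /\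
  (forall A : {set I}, lin_indep g A -> (#|A| <= n)%N).

End InnerProductSpace.

Section Blocks.
Variables (R : rcfType) (V : lmodType R) (cv : V -> V -> R).
Variables (K : nat) (r : 'I_K -> nat).

(* index set of the concatenated vector f = (f_1^T, ..., f_K^T)^T *)
Definition idx := {k : 'I_K & 'I_(r k)}.

Variable f : forall k : 'I_K, 'I_(r k) -> V.

Definition fcat (t : idx) : V := f (tagged t).

Definition covf (s t : idx) : R := cv (fcat s) (fcat t).

Definition block (eta : idx -> R) (k : 'I_K) (i : 'I_(r k)) : R :=
  eta (@existT _ (fun k => 'I_(r k)) k i).
Arguments block eta k i : clear implicits.

Definition frob_block (eta : idx -> R) (k : 'I_K) : R :=
  Num.sqrt (\sum_(i < r k) block eta k i ^+ 2).

Definition wvar (lam : R) (eta : idx -> R) : V :=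
  (Num.sqrt lam)^-1 *: \sum_(t : idx) eta t *: fcat t.

Definition zvar (eta : idx -> R) (k : 'I_K) : V :=
  if [forall i : 'I_(r k), block eta k i == 0] then 0
  else (frob_block eta k)^-1 *: \sum_(i < r k) block eta k i *: f i.

Definition dvar (lam : R) (eta : idx -> R) (a : R) (k : 'I_K) : V :=
  zvar eta k - a *: wvar lam eta.

Definition orth_pair (lam : R) (eta : idx -> R) (a : R) : Prop :=
  exists j k : 'I_K, j != k /\ perp cv (dvar lam eta a j) (dvar lam eta a k).

Definition alpha_spec (lam : R) (eta : idx -> R) (a : R) : Prop :=
  [/\ orth_pair lam eta a,
      forall b, orth_pair lam eta b -> `|a| <= `|b| &
      forall b, orth_pair lam eta b -> `|b| = `|a| -> b <> a -> a < 0].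

Definition cwz (lam : R) (eta : idx -> R) (k : 'I_K) : R :=
  cos_angle cv (wvar lam eta) (zvar eta k).

Definition Delta (lam : R) (eta : idx -> R) (j k : 'I_K) : R :=
  (cwz lam eta j + cwz lam eta k) ^+ 2 - 4 * cos_angle cv (zvar eta j) (zvar eta k).

Definition alpha_jk (lam : R) (eta : idx -> R) (j k : 'I_K) : R :=
  (cwz lam eta j + cwz lam eta k - Num.sqrt (Delta lam eta j k)) / 2.

Definition in_argmin_alpha (lam : R) (eta : idx -> R) (a : R) : Prop :=
  exists j k : 'I_K,
    [/\ (j < k)%N, 0 <= Delta lam eta j k, a = alpha_jk lam eta j k &
        forall j' k' : 'I_K, (j' < k')%N -> 0 <= Delta lam eta j' k' ->
          `|a| <= `|alpha_jk lam eta j' k'|].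

End Blocks.

(* The eigenvector equation gives cov(w, f_t) = lam^(1/2) eta_t; hence var w = 1,
   w = sum_k beta_k z_k with beta_k = |eta_k|_F / lam^(1/2) >= 0, and
   c_k := corr(w, z_k) >= 0.  Here lam > 0, since otherwise every entry of f would
   lie in the span of the first l < r_f principal components.  As each z_k is 0 or
   has unit variance, cov(d_j, d_k) = alpha^2 - (c_j + c_k) alpha + corr(z_j, z_k),
   whose roots are (c_j + c_k -+ Delta_jk^(1/2)) / 2; because c_j + c_k >= 0 the
   smaller root has the smaller modulus, so alpha^(l) is an alpha_jk of least
   modulus.  A real root exists: at alpha = 1 / sum_k beta_k one has
   sum_k beta_k d_k = 0, which forces cov(d_j, d_k) <= 0 for some j <> k. *)

From Pilot Require Import Defs.
From HB Require Import structures.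
From mathcomp Require Import all_boot all_order all_algebra.
From Stdlib Require Import Classical.
From mathcomp Require Import ring lra.
Import Order.TTheory GRing.Theory Num.Theory.
Set Implicit Arguments. Unset Strict Implicit. Unset Printing Implicit Defensive.
Local Open Scope ring_scope.

Section InnerProduct.
Variables (R : rcfType) (V : lmodType R) (cv : V -> V -> R).
Hypothesis cvP : is_inner_product cv.

Lemma cvC x y : cv x y = cv y x.
Proof. by case: cvP. Qed.

Lemma cv_ge0 x : 0 <= cv x x.
Proof. by case: cvP. Qed.

Lemma cv_eq0 x : cv x x = 0 -> x = 0.
Proof. by case: cvP => _ _ _; apply. Qed.

Lemma cvZDl a x y z : cv (a *: x + y) z = a * cv x z + cv y z.
Proof. by case: cvP => _ H _ _; apply: H. Qed.

Lemma cvDl x y z : cv (x + y) z = cv x z + cv y z.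
Proof. by rewrite -{1}(scale1r x) cvZDl mul1r. Qed.

Lemma cv0l z : cv 0 z = 0.
Proof. by apply: (@addrI _ (cv 0 z)); rewrite -cvDl !addr0. Qed.

Lemma cvZl a x z : cv (a *: x) z = a * cv x z.
Proof. by rewrite -(addr0 (a *: x)) cvZDl cv0l addr0. Qed.

Lemma cvBl x y z : cv (x - y) z = cv x z - cv y z.
Proof. by rewrite addrC -scaleN1r cvZDl mulN1r addrC. Qed.

Lemma cv0r z : cv z 0 = 0.
Proof. by rewrite cvC cv0l. Qed.

Lemma cvZr a x z : cv z (a *: x) = a * cv z x.
Proof. by rewrite cvC cvZl cvC. Qed.

Lemma cvBr x y z : cv z (x - y) = cv z x - cv z y.
Proof. by rewrite cvC cvBl !(cvC z). Qed.

Lemma cv_suml (I : Type) (s : seq I) (P : pred I) (F : I -> V) z :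
  cv (\sum_(i <- s | P i) F i) z = \sum_(i <- s | P i) cv (F i) z.
Proof. exact: (big_morph (cv ^~ z) (fun x y => cvDl x y z) (cv0l z)). Qed.

Lemma cv_sumr (I : Type) (s : seq I) (P : pred I) (F : I -> V) z :
  cv z (\sum_(i <- s | P i) F i) = \sum_(i <- s | P i) cv z (F i).
Proof. by rewrite cvC cv_suml; apply: eq_bigr => i _; rewrite cvC. Qed.

Lemma cos_angle_unit x y : (x = 0 \/ cv x x = 1) -> (y = 0 \/ cv y y = 1) ->
  cos_angle cv x y = cv x y.
Proof.
rewrite /cos_angle /vnorm => [[->|x1]]; first by rewrite !cv0l sqrtr0 eqxx.
case=> [->|y1]; first by rewrite !cv0r sqrtr0 eqxx orbT.
by rewrite x1 y1 sqrtr1 oner_eq0 mulr1 divr1.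
Qed.

Lemma exists_nonacute_pair (I : finType) (u : I -> V) (beta : I -> R) (j0 k0 : I) :
  j0 != k0 -> (forall i, 0 <= beta i) -> 0 < beta k0 ->
  \sum_i beta i *: u i = 0 -> exists2 j, j != k0 & cv (u j) (u k0) <= 0.
Proof.
move=> j0k0 beta_ge0 beta_k0 sum0.
case: (pickP (fun j => (j != k0) && (cv (u j) (u k0) <= 0))) => [j /andP[]|acute].
  by exists j.
have cv_gt0 j : j != k0 -> 0 < cv (u j) (u k0).
  by move=> jk0; move: (acute j); rewrite jk0 /= => /negbT; rewrite -ltNge.
have : cv (\sum_i beta i *: u i) (u k0) = 0 by rewrite sum0 cv0l.
rewrite cv_suml (bigD1 k0) //= cvZl => /eqP.
rewrite paddr_eq0; last 2 first.
- exact: mulr_ge0 (ltW beta_k0) (cv_ge0 _).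
- by apply: sumr_ge0 => j /cv_gt0 /ltW; rewrite cvZl; apply: mulr_ge0.
rewrite mulf_eq0 (gt_eqF beta_k0) /= => /andP[/eqP/cv_eq0 uk0 _].
by have := cv_gt0 _ j0k0; rewrite uk0 cv0r ltxx.
Qed.

End InnerProduct.

Section Quadratic.
Variable R : rcfType.
Implicit Types s p b : R.

Local Notation discr s p := (s ^+ 2 - 4 * p).

Lemma discr_ge0 s p b : p - b * s + b ^+ 2 <= 0 -> 0 <= discr s p.
Proof.
have -> : discr s p = (s - 2 * b) ^+ 2 - 4 * (p - b * s + b ^+ 2) by ring.
by have := sqr_ge0 (s - 2 * b); lra.
Qed.

Lemma quad_factor s p b : 0 <= discr s p ->
  p - b * s + b ^+ 2 =
  (b - (s - Num.sqrt (discr s p)) / 2) * (b - (s + Num.sqrt (discr s p)) / 2).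
Proof.
move=> /sqr_sqrtr; set q := Num.sqrt _ => q2.
have two_neq0 : (2 : R) != 0 by rewrite pnatr_eq0.
have -> : p = (s ^+ 2 - q ^+ 2) / 4 by rewrite q2; field.
by field.
Qed.

Lemma quad_rootP s p b : p - b * s + b ^+ 2 = 0 <->
  0 <= discr s p /\
  (b = (s - Num.sqrt (discr s p)) / 2 \/ b = (s + Num.sqrt (discr s p)) / 2).
Proof.
split=> [root_b | [/quad_factor -> [] ->]]; try by rewrite subrr ?mulr0 ?mul0r.
have D_ge0 : 0 <= discr s p by apply: (discr_ge0 (b := b)); rewrite root_b.
split=> //; move/eqP: root_b; rewrite quad_factor // mulf_eq0 !subr_eq0.
by case/orP=> /eqP; [left | right].
Qed.

Lemma quad_roots_abs_le s p : 0 <= s ->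
  `|(s - Num.sqrt (discr s p)) / 2| <= (s + Num.sqrt (discr s p)) / 2.
Proof.
have := sqrtr_ge0 (discr s p); set q := Num.sqrt _ => q_ge0 s_ge0.
by rewrite ler_norml; apply/andP; split; lra.
Qed.

End Quadratic.

Section LeastAbsoluteValue.
Variables (R : realDomainType) (O : R -> Prop).

(* Conditions (C.1)-(C.2), for the set O of values of alpha making some d_j, d_k orthogonal. *)
Definition least_abs (a : R) : Prop :=
  [/\ O a, forall b, O b -> `|a| <= `|b| &
      forall b, O b -> `|b| = `|a| -> b <> a -> a < 0].

Variables (I : finType) (P : pred I) (lo hi : I -> R).
Hypothesis O_roots : forall b, O b <-> exists2 i, P i & b = lo i \/ b = hi i.
Hypothesis abs_lo_le_hi : forall i, P i -> `|lo i| <= hi i.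

Let O_lo i : P i -> O (lo i).
Proof. by move=> Pi; apply/O_roots; exists i => //; left. Qed.

Lemma least_abs_lo a : least_abs a ->
  exists2 i, P i & a = lo i /\ forall j, P j -> `|a| <= `|lo j|.
Proof.
case=> Oa a_min a_tie; have [i Pi a_lo_hi] := (O_roots a).1 Oa.
have lo_min j : P j -> `|a| <= `|lo j| by move/O_lo/a_min.
exists i => //; split => //; case: a_lo_hi => // a_hi.
have hi_ge : `|lo i| <= a by rewrite a_hi abs_lo_le_hi.
have a_ge0 : 0 <= a := le_trans (normr_ge0 _) hi_ge.
have abs_lo : `|lo i| = `|a|.
  by apply/eqP; rewrite eq_le lo_min // andbT (ger0_norm a_ge0).
have [// | lo_neq] := eqVneq (lo i) a.
have := a_tie (lo i) (O_lo Pi) abs_lo (elimN eqP lo_neq).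
by rewrite ltNge a_ge0.
Qed.

Lemma least_abs_exists : (exists i, P i) -> exists a, least_abs a.
Proof.
case=> i0 Pi0; have [i Pi i_min] := arg_minP (fun i => `|lo i|) Pi0.
pose m := `|lo i|; have m_ge0 : 0 <= m := normr_ge0 _.
have m_min b : O b -> m <= `|b|.
  case/O_roots => j Pj [] ->; first exact: i_min.
  exact: le_trans (i_min j Pj) (le_trans (abs_lo_le_hi Pj) (ler_norm _)).
have [O_neg | O_negN] := classic (O (- m)).
  exists (- m); split => //; rewrite normrN (ger0_norm m_ge0) //.
  move=> b _ abs_b b_neq; rewrite oppr_lt0 lt_def m_ge0 andbT.
  apply: contra_notN b_neq => /eqP m0; apply/eqP.
  by rewrite m0 oppr0 -normr_eq0 abs_b m0.
have lo_i : lo i = m.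
  have [lo_ge0 | lo_lt0] := lerP 0 (lo i); first by rewrite /m ger0_norm.
  by move: O_negN; rewrite /m ltr0_norm // opprK => /(_ (O_lo Pi)).
exists m; split; rewrite ?(ger0_norm m_ge0) //; first by rewrite -lo_i; apply: O_lo.
move=> b Ob abs_b b_neq; exfalso; apply: O_negN.
have [b_ge0 | b_lt0] := lerP 0 b; first by move: abs_b; rewrite ger0_norm.
by move: abs_b; rewrite ltr0_norm // => <-; rewrite opprK.
Qed.

End LeastAbsoluteValue.

Section LinearAlgebra.
Variables (R : rcfType) (V : lmodType R).

Lemma lin_indep_card_le (I : finType) (g : I -> V) (m : nat) (h : 'I_m -> V)
    (C : I -> 'I_m -> R) (A : {set I}) :
  (forall t, g t = \sum_i C t i *: h i) -> lin_indep g A -> (#|A| <= m)%N.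
Proof.
move=> g_h indepA; rewrite leqNgt; apply/negP => m_lt_A.
pose M : 'M[R]_(#|A|, m) := \matrix_(a, i) C (enum_val a) i.
have /rowV0Pn [v /sub_kermxP vM0 v_neq0] : kermx M != 0.
  by rewrite kermx_eq0; apply: contraTN m_lt_A => /eqP <-; rewrite -leqNgt rank_leq_col.
have [t0 t0A] : exists t0, t0 \in A by apply/card_gt0P; apply: leq_ltn_trans m_lt_A.
pose c t := v 0 (enum_rank_in t0A t).
have : \sum_(t in A) c t *: g t = 0.
  under eq_bigr => t _ do rewrite g_h scaler_sumr.
  rewrite exchange_big big1 //= => i _.
  under eq_bigr => t _ do rewrite scalerA.
  rewrite -scaler_suml big_enum_val.
  have -> : \sum_(a < #|A|) c (enum_val a) * C (enum_val a) i = (v *m M) 0 i.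
    by rewrite mxE; apply: eq_bigr => a _; rewrite /c enum_valK_in mxE.
  by rewrite vM0 mxE scale0r.
move=> /indepA c0; move/eqP: v_neq0; apply; apply/rowP => a.
by rewrite mxE; have := c0 _ (enum_valP a); rewrite /c enum_valK_in.
Qed.

End LinearAlgebra.

Lemma orthonormal_cols (R : comUnitRingType) (I : finType) (e : 'I_#|I| -> I -> R) :
  (forall i j, \sum_t e i t * e j t = (i == j)%:R) ->
  forall s t, \sum_i e i s * e i t = (s == t)%:R.
Proof.
move=> rows s t; pose E : 'M[R]_#|I| := \matrix_(i, a) e i (enum_val a).
have : E *m E^T = 1%:M.
  apply/matrixP => i j; rewrite !mxE -rows (reindex _ (onW_bij _ (enum_val_bij I))).
  by apply: eq_bigr => a _; rewrite !mxE.
move/mulmx1C/matrixP/(_ (enum_rank s) (enum_rank t)).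
rewrite !mxE (inj_eq enum_rank_inj) => <-.
by apply: eq_bigr => i _; rewrite !mxE !enum_rankK.
Qed.

Lemma sum_idx (K : nat) (r : 'I_K -> nat) (M : nmodType) (G : idx r -> M) :
  \sum_(t : idx r) G t = \sum_(k < K) \sum_(i < r k) G (existT _ k i).
Proof.
pose G' (k : 'I_K) (i : 'I_(r k)) := G (existT _ k i).
rewrite (sig_big_dep xpredT (fun k => xpredT) G') /=.
by apply: eq_bigr => -[].
Qed.

Lemma exists_ordered_pair (K : nat) (Q : 'I_K -> 'I_K -> Prop) (j k : 'I_K) :
  (forall j k, Q j k -> Q k j) -> j != k -> Q j k ->
  exists j' k' : 'I_K, (j' < k')%N /\ Q j' k'.
Proof.
move=> Q_sym jk Qjk; case: (ltngtP j k) => [lt_jk | lt_kj | /val_inj eq_jk].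
- by exists j, k.
- by exists k, j; split=> //; apply: Q_sym.
- by rewrite eq_jk eqxx in jk.
Qed.

Section EigenPair.
Variables (R : rcfType) (V : lmodType R) (cv : V -> V -> R).
Hypothesis cvP : is_inner_product cv.
Variables (K : nat) (r : 'I_K -> nat) (f : forall k : 'I_K, 'I_(r k) -> V).
Arguments f : clear implicits.
Hypothesis f_orthonormal : forall k (i j : 'I_(r k)), cv (f k i) (f k j) = (i == j)%:R.
Variables (lam : R) (eta : idx r -> R).
Hypothesis eta_eigen : forall t, \sum_s covf cv f t s * eta s = lam * eta t.
Hypothesis eta_unit : \sum_t eta t * eta t = 1.
Hypothesis lam_gt0 : 0 < lam.

Local Notation w := (wvar f lam eta).
Local Notation z := (zvar f eta).
Local Notation rho := (frob_block eta).
Local Notation blk k i := (@block _ _ r eta k i).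

Let sqrt_lam2 : Num.sqrt lam ^+ 2 = lam.
Proof. by rewrite sqr_sqrtr // ltW. Qed.

Let sqrt_lam_neq0 : Num.sqrt lam != 0.
Proof. by rewrite gt_eqF // sqrtr_gt0. Qed.

Lemma cv_w_fcat t : cv w (fcat f t) = Num.sqrt lam * eta t.
Proof.
rewrite /wvar (cvZl cvP) (cv_suml cvP).
under eq_bigr => s _ do rewrite (cvZl cvP) (cvC cvP) mulrC.
rewrite eta_eigen -{2}sqrt_lam2.
by field.
Qed.

Lemma cv_ww : cv w w = 1.
Proof.
rewrite {1}/wvar (cvZl cvP) (cv_suml cvP).
under eq_bigr => t _ do rewrite (cvZl cvP) (cvC cvP) cv_w_fcat mulrCA.
by rewrite -mulr_sumr eta_unit mulr1 mulVf.
Qed.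

Let block_sum k := \sum_(i < r k) blk k i *: f k i.

Lemma rho_gt0 k : ~~ [forall i, blk k i == 0] -> 0 < rho k.
Proof.
case/forallPn => i blk_i; rewrite sqrtr_gt0 lt_def sumr_ge0 ?andbT => [|j _]; last first.
  exact: sqr_ge0.
apply: contraNneq blk_i => /psumr_eq0P/(_ i isT).
by rewrite -sqrf_eq0 => -> // j _; apply: sqr_ge0.
Qed.

Lemma block_sum_z k : block_sum k = rho k *: z k.
Proof.
rewrite /block_sum /zvar; case: ifP => [/forallP blk0 | /negbT /rho_gt0 /lt0r_neq0 rho_neq0].
  by rewrite scaler0 big1 // => i _; rewrite (eqP (blk0 i)) scale0r.
by rewrite scalerA divff // scale1r.
Qed.

Lemma cv_block_sum k : cv (block_sum k) (block_sum k) = rho k ^+ 2.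
Proof.
rewrite sqr_sqrtr ?sumr_ge0 // => [|i _]; last exact: sqr_ge0.
rewrite /block_sum (cv_suml cvP); apply: eq_bigr => i _.
rewrite (cvZl cvP) (cv_sumr cvP) (bigD1 i) //= big1 => [|j ji].
  by rewrite (cvZr cvP) f_orthonormal eqxx mulr1 addr0 expr2.
by rewrite (cvZr cvP) f_orthonormal eq_sym (negbTE ji) mulr0.
Qed.

Lemma z_unit k : z k = 0 \/ cv (z k) (z k) = 1.
Proof.
rewrite /zvar; case: ifP => [_ | /negbT /rho_gt0 /lt0r_neq0 rho_neq0]; [by left | right].
by rewrite (cvZl cvP) (cvZr cvP) cv_block_sum; field.
Qed.

Lemma w_decomp : w = \sum_k ((Num.sqrt lam)^-1 * rho k) *: z k.
Proof.
rewrite /wvar sum_idx scaler_sumr; apply: eq_bigr => k _.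
by rewrite -scalerA -block_sum_z.
Qed.

Lemma cv_z_w_ge0 k : 0 <= cv (z k) w.
Proof.
rewrite /zvar; case: ifP => _; first by rewrite (cv0l cvP).
rewrite (cvZl cvP) (cv_suml cvP) mulr_ge0 ?invr_ge0 ?sqrtr_ge0 ?sumr_ge0 // => i _.
rewrite (cvZl cvP) (cvC cvP); have -> : f k i = fcat f (existT _ k i) by [].
by rewrite cv_w_fcat mulrCA mulr_ge0 ?sqrtr_ge0 // -expr2 sqr_ge0.
Qed.

Local Notation c k := (cv (z k) w).
Local Notation Delta := (Delta cv f lam eta).
Local Notation alpha := (alpha_jk cv f lam eta).

Definition alpha_plus_jk j k :=
  (cwz cv f lam eta j + cwz cv f lam eta k + Num.sqrt (Delta j k)) / 2.

Lemma cwzE k : cwz cv f lam eta k = c k.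
Proof.
by rewrite /cwz (cos_angle_unit cvP); [exact: (cvC cvP) | right; apply: cv_ww | apply: z_unit].
Qed.

Lemma DeltaE j k : Delta j k = (c j + c k) ^+ 2 - 4 * cv (z j) (z k).
Proof. by rewrite /Defs.Delta !cwzE (cos_angle_unit cvP) //; apply: z_unit. Qed.

Lemma cv_dvar a j k :
  cv (dvar f lam eta a j) (dvar f lam eta a k) = cv (z j) (z k) - a * (c j + c k) + a ^+ 2.
Proof.
rewrite (cvBl cvP) !(cvBr cvP) !(cvZl cvP a) !(cvZr cvP a) cv_ww (cvC cvP w (z k)).
ring.
Qed.

Lemma orth_pair_lt b : orth_pair cv f lam eta b <->
  exists j k : 'I_K, (j < k)%N /\ cv (dvar f lam eta b j) (dvar f lam eta b k) = 0.
Proof.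
split=> [[j [k [jk perp_jk]]] | [j [k [jk perp_jk]]]].
  by apply: exists_ordered_pair jk perp_jk => j' k'; rewrite (cvC cvP).
by exists j, k; rewrite neq_ltn jk.
Qed.

Lemma orth_pairE b : orth_pair cv f lam eta b <->
  exists2 p : 'I_K * 'I_K, (p.1 < p.2)%N && (0 <= Delta p.1 p.2) &
    b = alpha p.1 p.2 \/ b = alpha_plus_jk p.1 p.2.
Proof.
have alphaE j k : alpha j k = (c j + c k - Num.sqrt (Delta j k)) / 2 /\
                  alpha_plus_jk j k = (c j + c k + Num.sqrt (Delta j k)) / 2.
  by rewrite /alpha_jk /alpha_plus_jk !cwzE.
split=> [/orth_pair_lt [j [k [jk]]] | [[j k] /= /andP[jk D_ge0] root_b]].
  rewrite cv_dvar => /quad_rootP; rewrite -DeltaE => -[D_ge0 root_b].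
  by exists (j, k); rewrite /= ?jk ?D_ge0 //; have [-> ->] := alphaE j k.
apply/orth_pair_lt; exists j, k; split=> //; rewrite cv_dvar.
by apply/quad_rootP; rewrite -DeltaE; have [<- <-] := alphaE j k.
Qed.

Lemma abs_alpha_le_plus j k : `|alpha j k| <= alpha_plus_jk j k.
Proof.
rewrite /alpha_jk /alpha_plus_jk !cwzE DeltaE.
by apply: quad_roots_abs_le; rewrite addr_ge0 ?cv_z_w_ge0.
Qed.

Lemma Delta_sym j k : Delta j k = Delta k j.
Proof. by rewrite !DeltaE (addrC (c j)) (cvC cvP (z j) (z k)). Qed.

Lemma exists_Delta_ge0 : (2 <= K)%N -> exists j k : 'I_K, (j < k)%N /\ 0 <= Delta j k.
Proof.
move=> K_ge2; pose beta k := (Num.sqrt lam)^-1 * rho k.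
have beta_ge0 k : 0 <= beta k by rewrite mulr_ge0 ?invr_ge0 ?sqrtr_ge0.
have [k0 beta_k0] : exists k0, 0 < beta k0.
  case: (pickP (fun k => 0 < beta k)) => [k0 ? | beta0]; first by exists k0.
  have {}beta0 k : beta k = 0.
    by apply/eqP; rewrite eq_le beta_ge0 andbT leNgt; apply/negbT; apply: beta0.
  have := cv_ww; rewrite w_decomp big1 => [|k _]; last by rewrite -/(beta k) beta0 scale0r.
  by rewrite (cv0l cvP) => /eqP; rewrite eq_sym oner_eq0.
have [j0 j0k0] : exists j0 : 'I_K, j0 != k0.
  have /card_gt0P [j0 /andP[j0k0 _]] : (0 < #|[predD1 'I_K & k0]|)%N.
    by move: K_ge2; rewrite -[K in (2 <= K)%N]card_ord (cardD1 k0) inE.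
  by exists j0.
pose B := \sum_k beta k; have B_gt0 : 0 < B.
  by rewrite /B (bigD1 k0) //= ltr_pwDl // sumr_ge0.
have sum0 : \sum_k beta k *: dvar f lam eta B^-1 k = 0.
  under eq_bigr => k _ do rewrite scalerBr scalerA.
  by rewrite sumrB -w_decomp -scaler_suml -mulr_suml mulfV ?scale1r ?subrr ?lt0r_neq0.
have [j jk0 obtuse] := exists_nonacute_pair cvP j0k0 beta_ge0 beta_k0 sum0.
apply: (exists_ordered_pair (Q := fun j k => 0 <= Delta j k)) jk0 _.
  by move=> j' k'; rewrite Delta_sym.
by rewrite DeltaE; apply: (discr_ge0 (b := B^-1)); rewrite -cv_dvar.
Qed.

Lemma alpha_spec_exists : (2 <= K)%N -> exists a, alpha_spec cv f lam eta a.
Proof.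
move=> /exists_Delta_ge0 [j [k [jk D_ge0]]].
apply: (least_abs_exists orth_pairE (fun p _ => abs_alpha_le_plus p.1 p.2)).
by exists (j, k); rewrite /= jk D_ge0.
Qed.

Lemma alpha_spec_argmin a : alpha_spec cv f lam eta a -> in_argmin_alpha cv f lam eta a.
Proof.
case/(least_abs_lo orth_pairE (fun p _ => abs_alpha_le_plus p.1 p.2)).
move=> [j k] /andP[jk D_ge0] [a_alpha a_min]; exists j, k; split=> // j' k' jk' D'.
by apply: (a_min (j', k')); rewrite /= jk' D'.
Qed.

End EigenPair.

Section PrincipalComponents.
Variables (R : rcfType) (V : lmodType R) (cv : V -> V -> R).
Hypothesis cvP : is_inner_product cv.
Variables (K : nat) (r : 'I_K -> nat) (f : forall k : 'I_K, 'I_(r k) -> V).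
Arguments f : clear implicits.
Local Notation N := #|{: idx r}|.
Variables (lam : 'I_N -> R) (eta : 'I_N -> idx r -> R).
Hypothesis eta_orthonormal : forall i j, \sum_t eta i t * eta j t = (i == j)%:R.
Hypothesis eta_eigen : forall i t, \sum_s covf cv f t s * eta i s = lam i * eta i t.

Let pc i := \sum_t eta i t *: fcat f t.

Lemma cv_pc i : cv (pc i) (pc i) = lam i.
Proof.
have row_t t : cv (fcat f t) (pc i) = lam i * eta i t.
  by rewrite (cv_sumr cvP) -eta_eigen; apply: eq_bigr => s _; rewrite (cvZr cvP) mulrC.
rewrite {1}/pc (cv_suml cvP); under eq_bigr => t _ do rewrite (cvZl cvP) row_t mulrCA.
by rewrite -mulr_sumr eta_orthonormal eqxx mulr1.
Qed.

Lemma fcat_pc t : fcat f t = \sum_(i < N) eta i t *: pc i.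
Proof.
under eq_bigr => i _ do rewrite scaler_sumr.
rewrite exchange_big /=.
under eq_bigr => s _ do rewrite (eq_bigr _ (fun i _ => scalerA _ _ _)) -scaler_suml.
under eq_bigr => s _ do rewrite (orthonormal_cols eta_orthonormal).
rewrite (bigD1 t) //= eqxx scale1r big1 ?addr0 // => s st.
by rewrite eq_sym (negbTE st) scale0r.
Qed.

Lemma eigenvalue_gt0 (rf : nat) (l : 'I_N) :
  (forall i j : 'I_N, (i <= j)%N -> lam j <= lam i) ->
  span_dim (fcat f) rf -> (l < rf)%N -> 0 < lam l.
Proof.
move=> lam_sorted [[A [indepA cardA]] _] l_lt_rf; rewrite ltNge; apply/negP => lam_le0.
have pc0 (i : 'I_N) : (l <= i)%N -> pc i = 0.
  move=> li; apply: (cv_eq0 cvP); rewrite cv_pc; apply/eqP.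
  by rewrite eq_le (le_trans (lam_sorted _ _ li) lam_le0) -cv_pc (cv_ge0 cvP).
have lN : (l <= N)%N := ltnW (ltn_ord l).
suff : (#|A| <= l)%N by rewrite cardA leqNgt l_lt_rf.
apply: (lin_indep_card_le (h := fun i : 'I_l => pc (widen_ord lN i))
                          (C := fun t i => eta (widen_ord lN i) t)) indepA => t.
rewrite fcat_pc (bigID (fun i : 'I_N => (i < l)%N)) /= big_ord_narrow.
by rewrite [X in _ + X]big1 ?addr0 // => i; rewrite -leqNgt => /pc0 ->; rewrite scaler0.
Qed.

End PrincipalComponents.

Theorem theorem2 (R : rcfType) (V : lmodType R) (cv : V -> V -> R)
  (K : nat) (p : 'I_K -> nat) (x : forall k : 'I_K, 'I_(p k) -> V)
  (r : 'I_K -> nat) (f : forall k : 'I_K, 'I_(r k) -> V) (rf : nat)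
  (lam : 'I_#|{: idx r}| -> R) (eta : 'I_#|{: idx r}| -> idx r -> R)
  (l : 'I_#|{: idx r}|) :
  is_inner_product cv ->
  (2 <= K)%N ->
  (forall k, span_dim (x k) (r k)) ->
  (forall k, (1 <= r k)%N) ->
  (forall k (i j : 'I_(r k)), cv (f k i) (f k j) = (i == j)%:R) ->
  (forall k i, in_span (x k) (f k i)) ->
  (forall k j, in_span (f k) (x k j)) ->
  span_dim (fcat f) rf ->
  (forall i j, \sum_(t : idx r) eta i t * eta j t = (i == j)%:R) ->
  (forall i t, \sum_(s : idx r) covf cv f t s * eta i s = lam i * eta i t) ->
  (forall i j : 'I_#|{: idx r}|, (i <= j)%N -> lam j <= lam i) ->
  (l < rf)%N ->
  (exists j k : 'I_K, (j < k)%N /\ 0 <= Delta cv f (lam l) (eta l) j k) /\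
  (exists a, alpha_spec cv f (lam l) (eta l) a) /\
  (forall a, alpha_spec cv f (lam l) (eta l) a ->
             in_argmin_alpha cv f (lam l) (eta l) a).
Proof.
move=> cvP K_ge2 _ _ f_orthonormal _ _ rank_f eta_orthonormal eta_eigen lam_sorted l_lt_rf.
have lam_gt0 : 0 < lam l := eigenvalue_gt0 cvP eta_orthonormal eta_eigen lam_sorted rank_f l_lt_rf.
have eta_unit : \sum_t eta l t * eta l t = 1 by rewrite eta_orthonormal eqxx.
split; first exact: (exists_Delta_ge0 cvP f_orthonormal (eta_eigen l) eta_unit lam_gt0 K_ge2).
split; first exact: (alpha_spec_exists cvP f_orthonormal (eta_eigen l) eta_unit lam_gt0 K_ge2).
exact: (alpha_spec_argmin cvP f_orthonormal (eta_eigen l) eta_unit lam_gt0).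
Qed.
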